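(* Let $\sim$ and $\sim'$ be right congruences on $\Sigma^*$. (a) If $\sim'$ is coarser than $\sim$ (i.e. $\sim\subseteq\sim'$) and $\sim$ has no critical tuple, then $\sim'$ has no critical tuple. (b) If $\sim$ and $\sim'$ both have no critical tuple, then $\sim\cap\sim'$ is a right congruence which has no critical tuple.
   Context: A right congruence on $\Sigma^*$ is an equivalence $\sim$ with $x\sim y\Rightarrow xz\sim yz$. A critical tuple in a right congruence $\sim$ is $(u_2,v_2,u,v)$ with $|u_2|=|v_2|\ge1$, $u=u_1u_2$, $v=v_1v_2$ for some words $u_1,v_1$, and $u_2w\not\sim v_2w$ for all $w\in\{u,v\}^*$. *)

From mathcomp Require Import all_boot.
Set Implicit Arguments. Unset Strict Implicit. Unset Printing Implicit Defensive.

Definition right_congruence (Sigma : finType) (R : seq Sigma -> seq Sigma -> Prop) : Prop :=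
  (forall x, R x x) /\ (forall x y, R x y -> R y x) /\
  (forall x y z, R x y -> R y z -> R x z) /\
  (forall x y z, R x y -> R (x ++ z) (y ++ z)).

Inductive in_star2 (Sigma : finType) (u v : seq Sigma) : seq Sigma -> Prop :=
| star_nil : in_star2 u v [::]
| star_u w : in_star2 u v w -> in_star2 u v (u ++ w)
| star_v w : in_star2 u v w -> in_star2 u v (v ++ w).

Definition critical_tuple (Sigma : finType) (R : seq Sigma -> seq Sigma -> Prop)
    (u2 v2 u v : seq Sigma) : Prop :=
  size u2 = size v2 /\ 1 <= size u2 /\
  (exists u1 v1, u = u1 ++ u2 /\ v = v1 ++ v2) /\
  (forall w, in_star2 u v w -> ~ R (u2 ++ w) (v2 ++ w)).

Definition no_critical_tuple (Sigma : finType) (R : seq Sigma -> seq Sigma -> Prop) : Prop :=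
  forall u2 v2 u v, ~ critical_tuple R u2 v2 u v.

From mathcomp Require Import all_boot.

Set Implicit Arguments.
Unset Strict Implicit.
Unset Printing Implicit Defensive.

(* (a) is monotonicity: a critical tuple of a coarser relation is one of the
   finer relation.  For (b), take a critical tuple (u2, v2, u, v) of the
   intersection.  As it is not critical for R, some w in {u,v}^* has
   u2 w R v2 w; then (u2 w, v2 w, u w, v w) is critical for R', because
   {uw, vw}^* is contained in {u,v}^* and R is stable under right
   concatenation. *)

Section CriticalTuples.

Variable Sigma : finType.
Implicit Types (R : seq Sigma -> seq Sigma -> Prop) (u v w : seq Sigma).

Lemma in_star2_cat u v w w' :
  in_star2 u v w -> in_star2 u v w' -> in_star2 u v (w ++ w').
Proof.
elim=> [|x _ IH|x _ IH] Hw' //=; rewrite -catA; [apply: star_u | apply: star_v];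
  exact: IH.
Qed.

Lemma in_star2_catr u v w w' :
  in_star2 u v w -> in_star2 (u ++ w) (v ++ w) w' -> in_star2 u v w'.
Proof.
move=> Hw; elim=> [|x _ IH|x _ IH]; first exact: star_nil.
- by rewrite -catA; apply: star_u; apply: in_star2_cat.
- by rewrite -catA; apply: star_v; apply: in_star2_cat.
Qed.

Lemma critical_tuple_sub R R' u2 v2 u v :
  (forall x y, R x y -> R' x y) ->
  critical_tuple R' u2 v2 u v -> critical_tuple R u2 v2 u v.
Proof.
move=> sub [eq_size [u2_gt0 [dec nR']]]; do 3!split=> //.
by move=> w Hw /sub; apply: nR'.
Qed.

Lemma no_critical_tuple_sub R R' :
  (forall x y, R x y -> R' x y) -> no_critical_tuple R -> no_critical_tuple R'.
Proof. by move=> sub ncR u2 v2 u v /(critical_tuple_sub sub); apply: ncR. Qed.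

Lemma right_congruenceI R R' :
  right_congruence R -> right_congruence R' ->
  right_congruence (fun x y => R x y /\ R' x y).
Proof.
move=> [refl [sym [trans cat]]] [refl' [sym' [trans' cat']]].
split; first by [].
split; first by move=> x y [] /sym ? /sym'.
split; first by move=> x y z [/trans Rxy /trans' Rxy'] [/Rxy ? /Rxy'].
by move=> x y z [/cat ? /cat'].
Qed.

Lemma critical_tupleI_catr R R' u2 v2 u v w :
  (forall x y z, R x y -> R (x ++ z) (y ++ z)) ->
  critical_tuple (fun x y => R x y /\ R' x y) u2 v2 u v ->
  in_star2 u v w -> R (u2 ++ w) (v2 ++ w) ->
  critical_tuple R' (u2 ++ w) (v2 ++ w) (u ++ w) (v ++ w).
Proof.
move=> cat [eq_size [u2_gt0 [[u1 [v1 [-> ->]]] nRR']]] Hw Rw.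
split; first by rewrite !size_cat eq_size.
split; first by rewrite size_cat (leq_trans u2_gt0) ?leq_addr.
split; first by exists u1, v1; rewrite !catA.
move=> w' Hw' R'w'; apply: (nRR' (w ++ w')).
  by apply: in_star2_cat => //; apply: in_star2_catr Hw Hw'.
by rewrite !catA; split=> //; apply: cat.
Qed.

Lemma no_critical_tupleI R R' :
  right_congruence R -> no_critical_tuple R -> no_critical_tuple R' ->
  no_critical_tuple (fun x y => R x y /\ R' x y).
Proof.
move=> [_ [_ [_ cat]]] ncR ncR' u2 v2 u v crit.
apply: (ncR u2 v2 u v).
have [eq_size [u2_gt0 [dec _]]] := crit; do 3!split=> //.
by move=> w Hw Rw; apply: ncR' (critical_tupleI_catr cat crit Hw Rw).
Qed.

End CriticalTuples.

Theorem lemma17 (Sigma : finType) :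
  (forall R R' : seq Sigma -> seq Sigma -> Prop,
      right_congruence R -> right_congruence R' ->
      (forall x y, R x y -> R' x y) ->
      no_critical_tuple R -> no_critical_tuple R') /\
  (forall R R' : seq Sigma -> seq Sigma -> Prop,
      right_congruence R -> right_congruence R' ->
      no_critical_tuple R -> no_critical_tuple R' ->
      right_congruence (fun x y => R x y /\ R' x y) /\
      no_critical_tuple (fun x y => R x y /\ R' x y)).
Proof.
split=> R R' congR congR'; first exact: no_critical_tuple_sub.
move=> ncR ncR'; split; first exact: right_congruenceI.
exact: no_critical_tupleI.
Qed.
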